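(* In the calculus $\lambda^{RE}$ described in the context: if $e_1\Rrightarrow^* e_1'$, $e_2\Rrightarrow^* e_2'$ and $\delta\vdash e_1'\approx e_2':\tau$, then $\delta\vdash e_1\approx e_2:\tau$.
   Context: Syntax of $\lambda^{RE}$. Basic types $b ::= \mathsf{Bool}\mid\mathsf{Unit}$. Constants $c ::= \mathsf{true}\mid\mathsf{false}\mid\mathsf{unit}\mid (=_b)\mid (=_{(c,b)})$. Expressions $e ::= c\mid x\mid e\ e\mid \lambda x{:}\tau.\,e\mid \mathsf{BEq}_b\ e\ e\ e\mid \mathsf{XEq}_{x:\tau\to\tau}\ e\ e\ e$. Values $v ::= c\mid \lambda x{:}\tau.\,e\mid \mathsf{BEq}_b\ e\ e\ v\mid \mathsf{XEq}_{x:\tau\to\tau}\ e\ e\ v$. Types $\tau ::= \{x{:}b\mid e\}\mid x{:}\tau\to\tau\mid \mathsf{PEq}_{\tau}\{e\}\{e\}$. $e[x:=e']$ is capture-avoiding substitution. Reduction: evaluation contexts $E ::= \bullet\mid E\ e\mid v\ E\mid \mathsf{BEq}_b\ e\ e\ E\mid\mathsf{XEq}_{x:\tau\to\tau}\ e\ e\ E$; $E[e]\to E[e']$ if $e\to e'$; $(\lambda x{:}\tau.\,e)\ v\to e[x:=v]$; $(=_b)\ c_1\to(=_{(c_1,b)})$; $(=_{(c_1,b)})\ c_2\to\mathsf{true}$ if $c_1,c_2$ syntactically equal, else $\to\mathsf{false}$. $\to^*$ is the reflexive–transitive closure. Parallel reduction $e\Rrightarrow e'$, $\tau\Rrightarrow\tau'$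 (inductive): $x\Rrightarrow x$; $c\Rrightarrow c$; $\lambda x{:}\tau.e\Rrightarrow\lambda x{:}\tau'.e'$ if $\tau\Rrightarrow\tau'$, $e\Rrightarrow e'$; $e_1\ e_2\Rrightarrow e_1'\ e_2'$ if $e_i\Rrightarrow e_i'$; $(\lambda x{:}\tau.e)\ v\Rrightarrow e'[x:=v']$ if $e\Rrightarrow e'$, $v\Rrightarrow v'$; $(=_b)\ c_1\Rrightarrow(=_{(c_1,b)})$; $(=_{(c_1,b)})\ c_2\Rrightarrow\mathsf{true}$ if $c_1,c_2$ syntactically equal, $\Rrightarrow\mathsf{false}$ otherwise; $\mathsf{BEq}$ and $\mathsf{XEq}$ terms reduce componentwise (including type annotations); types reduce componentwise ($\{x{:}b\mid r\}\Rrightarrow\{x{:}b\mid r'\}$ if $r\Rrightarrow r'$, etc.). $\Rrightarrow^*$ is the reflexive–transitive closure. Equivalence logical relation. A pending substitution $\delta$ maps variables to pairs of closed values; $\delta_1,\delta_2$ are its component substitutions, and $\delta,(v_1,v_2)/x$ extends it. Value relation $\delta\vdash v_1\approx_{val}v_2:\tau$: for $\{x{:}b\mid r\}$: $v_1=v_2=c$ with $c$ a constant of simple type $b$, $\delta_1(r[x:=c])\to^*\mathsf{true}$ and $\delta_2(r[x:=c])\to^*\mathsf{true}$; for $x{:}\tau_x\to\tau$: for all $v_3,v_4$ with $\delta\vdash v_3\approx_{val}v_4:\tau_x$, $\delta,(v_3,v_4)/x\vdash v_1\ v_3\approx v_2\ v_4:\tau$; for $\mathsf{PEq}_\tau\{e_l\}\{e_r\}$: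 $\delta\vdash\delta_1(e_l)\approx\delta_2(e_r):\tau$. Expression relation: $\delta\vdash e_1\approx e_2:\tau$ iff $e_1\to^*v_1$, $e_2\to^*v_2$ and $\delta\vdash v_1\approx_{val}v_2:\tau$. *)

From Stdlib Require Import List Relations.
Import ListNotations.

Inductive basic : Type := BBool | BUnit.

Inductive const : Type :=
| CTrue | CFalse | CUnit
| CEq (b : basic)
| CEq1 (c : const) (b : basic).

(* Binders (de Bruijn index 0):
   - ELam t e       : lambda x:t. e        (x bound in e)
   - EXEq tx t l r p: XEq_{x:tx -> t} l r p (x bound in t)
   - TRef b r       : {x:b | r}            (x bound in r)
   - TArr tx t      : x:tx -> t            (x bound in t) *)
Inductive expr : Type :=
| EConst (c : const)
| EVar (x : nat)
| EApp (e1 e2 : expr)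
| ELam (t : ty) (e : expr)
| EBEq (b : basic) (el er ep : expr)
| EXEq (tx t : ty) (el er ep : expr)
with ty : Type :=
| TRef (b : basic) (r : expr)
| TArr (tx t : ty)
| TPEq (t : ty) (el er : expr).

Inductive is_value : expr -> Prop :=
| VConst c : is_value (EConst c)
| VLam t e : is_value (ELam t e)
| VBEq b el er v : is_value v -> is_value (EBEq b el er v)
| VXEq tx t el er v : is_value v -> is_value (EXEq tx t el er v).

Definition up_ren (xi : nat -> nat) : nat -> nat :=
  fun n => match n with 0 => 0 | S m => S (xi m) end.

Fixpoint ren_e (xi : nat -> nat) (e : expr) : expr :=
  match e with
  | EConst c => EConst c
  | EVar x => EVar (xi x)
  | EApp e1 e2 => EApp (ren_e xi e1) (ren_e xi e2)
  | ELam t e => ELam (ren_t xi t) (ren_e (up_ren xi) e)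
  | EBEq b el er ep => EBEq b (ren_e xi el) (ren_e xi er) (ren_e xi ep)
  | EXEq tx t el er ep =>
      EXEq (ren_t xi tx) (ren_t (up_ren xi) t) (ren_e xi el) (ren_e xi er) (ren_e xi ep)
  end
with ren_t (xi : nat -> nat) (t : ty) : ty :=
  match t with
  | TRef b r => TRef b (ren_e (up_ren xi) r)
  | TArr tx t => TArr (ren_t xi tx) (ren_t (up_ren xi) t)
  | TPEq t el er => TPEq (ren_t xi t) (ren_e xi el) (ren_e xi er)
  end.

Definition up_sub (s : nat -> expr) : nat -> expr :=
  fun n => match n with 0 => EVar 0 | S m => ren_e S (s m) end.

Fixpoint subst_e (s : nat -> expr) (e : expr) : expr :=
  match e with
  | EConst c => EConst c
  | EVar x => s x
  | EApp e1 e2 => EApp (subst_e s e1) (subst_e s e2)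
  | ELam t e => ELam (subst_t s t) (subst_e (up_sub s) e)
  | EBEq b el er ep => EBEq b (subst_e s el) (subst_e s er) (subst_e s ep)
  | EXEq tx t el er ep =>
      EXEq (subst_t s tx) (subst_t (up_sub s) t) (subst_e s el) (subst_e s er) (subst_e s ep)
  end
with subst_t (s : nat -> expr) (t : ty) : ty :=
  match t with
  | TRef b r => TRef b (subst_e (up_sub s) r)
  | TArr tx t => TArr (subst_t s tx) (subst_t (up_sub s) t)
  | TPEq t el er => TPEq (subst_t s t) (subst_e s el) (subst_e s er)
  end.

Definition sub0 (v : expr) : nat -> expr :=
  fun n => match n with 0 => v | S m => EVar m end.
Definition subst0_e (v e : expr) : expr := subst_e (sub0 v) e.
Definition subst0_t (v : expr) (t : ty) : ty := subst_t (sub0 v) t.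

Fixpoint wf_e (k : nat) (e : expr) : Prop :=
  match e with
  | EConst _ => True
  | EVar x => x < k
  | EApp e1 e2 => wf_e k e1 /\ wf_e k e2
  | ELam t e => wf_t k t /\ wf_e (S k) e
  | EBEq _ el er ep => wf_e k el /\ wf_e k er /\ wf_e k ep
  | EXEq tx t el er ep => wf_t k tx /\ wf_t (S k) t /\ wf_e k el /\ wf_e k er /\ wf_e k ep
  end
with wf_t (k : nat) (t : ty) : Prop :=
  match t with
  | TRef _ r => wf_e (S k) r
  | TArr tx t => wf_t k tx /\ wf_t (S k) t
  | TPEq t el er => wf_t k t /\ wf_e k el /\ wf_e k er
  end.
Definition closed (e : expr) : Prop := wf_e 0 e.

(* Small-step reduction (call-by-value, evaluation contexts inlined). *)
Inductive step : expr -> expr -> Prop :=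
| S_AppL e1 e1' e2 : step e1 e1' -> step (EApp e1 e2) (EApp e1' e2)
| S_AppR v e2 e2' : is_value v -> step e2 e2' -> step (EApp v e2) (EApp v e2')
| S_BEq b el er e e' : step e e' -> step (EBEq b el er e) (EBEq b el er e')
| S_XEq tx t el er e e' : step e e' -> step (EXEq tx t el er e) (EXEq tx t el er e')
| S_Beta t e v : is_value v -> step (EApp (ELam t e) v) (subst0_e v e)
| S_Eq b c1 : step (EApp (EConst (CEq b)) (EConst c1)) (EConst (CEq1 c1 b))
| S_EqT c1 b c2 : c1 = c2 ->
    step (EApp (EConst (CEq1 c1 b)) (EConst c2)) (EConst CTrue)
| S_EqF c1 b c2 : c1 <> c2 ->
    step (EApp (EConst (CEq1 c1 b)) (EConst c2)) (EConst CFalse).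

Definition steps : expr -> expr -> Prop := clos_refl_trans expr step.

Inductive par_e : expr -> expr -> Prop :=
| P_Var x : par_e (EVar x) (EVar x)
| P_Const c : par_e (EConst c) (EConst c)
| P_Lam t t' e e' : par_t t t' -> par_e e e' -> par_e (ELam t e) (ELam t' e')
| P_App e1 e1' e2 e2' : par_e e1 e1' -> par_e e2 e2' -> par_e (EApp e1 e2) (EApp e1' e2')
| P_Beta t e e' v v' : is_value v -> par_e e e' -> par_e v v' ->
    par_e (EApp (ELam t e) v) (subst0_e v' e')
| P_Eq b c1 : par_e (EApp (EConst (CEq b)) (EConst c1)) (EConst (CEq1 c1 b))
| P_EqT c1 b c2 : c1 = c2 ->
    par_e (EApp (EConst (CEq1 c1 b)) (EConst c2)) (EConst CTrue)
| P_EqF c1 b c2 : c1 <> c2 ->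
    par_e (EApp (EConst (CEq1 c1 b)) (EConst c2)) (EConst CFalse)
| P_BEq b el el' er er' ep ep' : par_e el el' -> par_e er er' -> par_e ep ep' ->
    par_e (EBEq b el er ep) (EBEq b el' er' ep')
| P_XEq tx tx' t t' el el' er er' ep ep' :
    par_t tx tx' -> par_t t t' -> par_e el el' -> par_e er er' -> par_e ep ep' ->
    par_e (EXEq tx t el er ep) (EXEq tx' t' el' er' ep')
with par_t : ty -> ty -> Prop :=
| P_TRef b r r' : par_e r r' -> par_t (TRef b r) (TRef b r')
| P_TArr tx tx' t t' : par_t tx tx' -> par_t t t' -> par_t (TArr tx t) (TArr tx' t')
| P_TPEq t t' el el' er er' : par_t t t' -> par_e el el' -> par_e er er' ->
    par_t (TPEq t el er) (TPEq t' el' er').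

Definition par_star : expr -> expr -> Prop := clos_refl_trans expr par_e.

Inductive const_basic : const -> basic -> Prop :=
| CB_True : const_basic CTrue BBool
| CB_False : const_basic CFalse BBool
| CB_Unit : const_basic CUnit BUnit.

(* Pending substitutions: delta is a list of pairs of closed values;
   the head of the list is the binding of de Bruijn index 0. *)
Definition pending_subst (d : list (expr * expr)) : Prop :=
  Forall (fun p => is_value (fst p) /\ closed (fst p) /\
                   is_value (snd p) /\ closed (snd p)) d.

Definition env_sub (vs : list expr) : nat -> expr :=
  fun n => match nth_error vs n with
           | Some v => v
           | None => EVar (n - length vs)
           end.
Definition apply_env (vs : list expr) (e : expr) : expr := subst_e (env_sub vs) e.
Definition delta1 (d : list (expr * expr)) : list expr := map fst d.
Definition delta2 (d : list (expr * expr)) : list expr := map snd d.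

Fixpoint val_rel (t : ty) (d : list (expr * expr)) (v1 v2 : expr) {struct t} : Prop :=
  match t with
  | TRef b r =>
      exists c, v1 = EConst c /\ v2 = EConst c /\ const_basic c b /\
        steps (apply_env (delta1 d) (subst0_e (EConst c) r)) (EConst CTrue) /\
        steps (apply_env (delta2 d) (subst0_e (EConst c) r)) (EConst CTrue)
  | TArr tx t' =>
      forall v3 v4, is_value v3 -> closed v3 -> is_value v4 -> closed v4 ->
        val_rel tx d v3 v4 ->
        exists w1 w2, steps (EApp v1 v3) w1 /\ is_value w1 /\
                      steps (EApp v2 v4) w2 /\ is_value w2 /\
                      val_rel t' ((v3, v4) :: d) w1 w2
  | TPEq t' el er =>
      exists w1 w2, steps (apply_env (delta1 d) el) w1 /\ is_value w1 /\
                    steps (apply_env (delta2 d) er) w2 /\ is_value w2 /\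
                    val_rel t' d w1 w2
  end.

Definition exp_rel (d : list (expr * expr)) (e1 e2 : expr) (t : ty) : Prop :=
  exists v1 v2, steps e1 v1 /\ is_value v1 /\ steps e2 v2 /\ is_value v2 /\
                val_rel t d v1 v2.

(* A parallel reduction e ⇛ e' can be undone along the evaluation of e': if
   e' →* v' with v' a value, then e →* v for a value v with v ⇛ v'.  This is
   proved by induction on the height of a big-step evaluation of e' and, inside,
   on the derivation of e ⇛ e'.  A β-redex contracted by ⇛ is contracted by a
   real step of e first; a β-step of e' is matched by one of e, whose function
   evaluates to a λ with a body ⇛-related to the one in e'.  That body is not a
   subterm, hence the height as measure, and it is evaluated under a
   substitution, hence the induction carries ⇛-related substitutions of values
   or variables (which evaluate at most to themselves).  Iterating along ⇛*
   gives v ⇛* v', and the value relation is closed under such expansions by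
   induction on τ: refinement types only relate constants, which ⇛ fixes; arrow
   types reduce to the previous fact for applications; PEq types do not look at
   the values at all. *)

From Stdlib Require Import Relations Lia Wf_nat.

Scheme expr_mut := Induction for expr Sort Prop
  with ty_mut := Induction for ty Sort Prop.
Combined Scheme expr_ty_mut from expr_mut, ty_mut.

Definition scons (w : expr) (s : nat -> expr) : nat -> expr :=
  fun n => match n with 0 => w | S m => s m end.

Lemma up_sub_ext s s' : (forall n, s n = s' n) -> forall n, up_sub s n = up_sub s' n.
Proof. intros H [|n]; simpl; rewrite ?H; reflexivity. Qed.

Lemma subst_ext :
  (forall e s s', (forall n, s n = s' n) -> subst_e s e = subst_e s' e) /\
  (forall t s s', (forall n, s n = s' n) -> subst_t s t = subst_t s' t).
Proof. apply expr_ty_mut; intros; simpl; f_equal; eauto using up_sub_ext. Qed.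

Lemma ren_as_subst :
  (forall e xi, ren_e xi e = subst_e (fun n => EVar (xi n)) e) /\
  (forall t xi, ren_t xi t = subst_t (fun n => EVar (xi n)) t).
Proof.
  apply expr_ty_mut; intros; simpl; f_equal; eauto;
    rewrite ?H, ?H0, ?H1; first [apply (proj1 subst_ext) | apply (proj2 subst_ext)];
    intros [|n]; reflexivity.
Qed.

Lemma subst_ren :
  (forall e s xi, subst_e s (ren_e xi e) = subst_e (fun n => s (xi n)) e) /\
  (forall t s xi, subst_t s (ren_t xi t) = subst_t (fun n => s (xi n)) t).
Proof.
  apply expr_ty_mut; intros; simpl; f_equal; eauto;
    rewrite ?H, ?H0, ?H1; first [apply (proj1 subst_ext) | apply (proj2 subst_ext)];
    intros [|n]; reflexivity.
Qed.

Lemma ren_ren e xi zeta : ren_e xi (ren_e zeta e) = ren_e (fun n => xi (zeta n)) e.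
Proof. rewrite (proj1 ren_as_subst _ xi), (proj1 subst_ren), (proj1 ren_as_subst). reflexivity. Qed.

Lemma ren_subst :
  (forall e s xi, ren_e xi (subst_e s e) = subst_e (fun n => ren_e xi (s n)) e) /\
  (forall t s xi, ren_t xi (subst_t s t) = subst_t (fun n => ren_e xi (s n)) t).
Proof.
  apply expr_ty_mut; intros; simpl; f_equal; eauto;
    rewrite ?H, ?H0, ?H1; first [apply (proj1 subst_ext) | apply (proj2 subst_ext)];
    intros [|n]; simpl; rewrite ?ren_ren; reflexivity.
Qed.

Lemma subst_subst :
  (forall e s s', subst_e s (subst_e s' e) = subst_e (fun n => subst_e s (s' n)) e) /\
  (forall t s s', subst_t s (subst_t s' t) = subst_t (fun n => subst_e s (s' n)) t).
Proof.
  apply expr_ty_mut; intros; simpl; f_equal; eauto;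
    rewrite ?H, ?H0, ?H1; first [apply (proj1 subst_ext) | apply (proj2 subst_ext)];
    intros [|n]; simpl; rewrite ?(proj1 subst_ren), ?(proj1 ren_subst); reflexivity.
Qed.

Lemma subst_id : (forall e, subst_e EVar e = e) /\ (forall t, subst_t EVar t = t).
Proof.
  assert (Hup : forall n, up_sub EVar n = EVar n) by (intros [|n]; reflexivity).
  apply expr_ty_mut; intros; simpl; f_equal;
    rewrite ?(proj1 subst_ext _ _ _ Hup), ?(proj2 subst_ext _ _ _ Hup); assumption.
Qed.

Lemma subst0_up_sub s w e : subst0_e w (subst_e (up_sub s) e) = subst_e (scons w s) e.
Proof.
  unfold subst0_e. rewrite (proj1 subst_subst). apply (proj1 subst_ext); intros [|n]; simpl; auto.
  rewrite (proj1 subst_ren). apply (proj1 subst_id).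
Qed.

Lemma subst_subst0_scons s w e : subst_e s (subst0_e w e) = subst_e (scons (subst_e s w) s) e.
Proof.
  unfold subst0_e. rewrite (proj1 subst_subst). apply (proj1 subst_ext); intros [|n]; reflexivity.
Qed.

Lemma ren_subst0 xi w e :
  ren_e xi (subst0_e w e) = subst0_e (ren_e xi w) (ren_e (up_ren xi) e).
Proof.
  unfold subst0_e. rewrite (proj1 ren_subst), (proj1 subst_ren).
  apply (proj1 subst_ext); intros [|n]; reflexivity.
Qed.

Scheme par_e_mut := Induction for par_e Sort Prop
  with par_t_mut := Induction for par_t Sort Prop.
Combined Scheme par_mut from par_e_mut, par_t_mut.

Lemma par_refl : (forall e, par_e e e) /\ (forall t, par_t t t).
Proof. apply expr_ty_mut; intros; constructor; auto. Qed.

Lemma value_ren xi v : is_value v -> is_value (ren_e xi v).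
Proof. induction 1; simpl; constructor; auto. Qed.

Lemma value_subst s v : is_value v -> is_value (subst_e s v).
Proof. induction 1; simpl; constructor; auto. Qed.

Lemma par_ren :
  (forall e e', par_e e e' -> forall xi, par_e (ren_e xi e) (ren_e xi e')) /\
  (forall t t', par_t t t' -> forall xi, par_t (ren_t xi t) (ren_t xi t')).
Proof.
  apply par_mut; intros; simpl; try (constructor; auto; fail).
  rewrite ren_subst0. constructor; auto using value_ren.
Qed.

Lemma par_up_sub s s' :
  (forall n, par_e (s n) (s' n)) -> forall n, par_e (up_sub s n) (up_sub s' n).
Proof. intros H [|n]; simpl; [constructor | apply (proj1 par_ren); auto]. Qed.

Lemma par_subst :
  (forall e e', par_e e e' -> forall s s', (forall n, par_e (s n) (s' n)) ->
     par_e (subst_e s e) (subst_e s' e')) /\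
  (forall t t', par_t t t' -> forall s s', (forall n, par_e (s n) (s' n)) ->
     par_t (subst_t s t) (subst_t s' t')).
Proof.
  apply par_mut; intros; simpl; try (constructor; auto using par_up_sub; fail).
  - auto.
  - rewrite !subst_subst0_scons, <- !subst0_up_sub.
    constructor; auto using par_up_sub, value_subst.
Qed.

Lemma par_subst_e s s' e e' :
  (forall n, par_e (s n) (s' n)) -> par_e e e' -> par_e (subst_e s e) (subst_e s' e').
Proof. intros Hs Hp; apply (proj1 par_subst); assumption. Qed.

Lemma par_subst_t s s' t t' :
  (forall n, par_e (s n) (s' n)) -> par_t t t' -> par_t (subst_t s t) (subst_t s' t').
Proof. intros Hs Hp; apply (proj2 par_subst); assumption. Qed.

Lemma par_value v v' : is_value v -> par_e v v' -> is_value v'.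
Proof.
  intros Hv; revert v'; induction Hv; intros v' Hp; inversion Hp; subst; constructor; auto.
Qed.

Lemma par_value_const v c : is_value v -> par_e v (EConst c) -> v = EConst c.
Proof. intros Hv Hp; inversion Hp; subst; auto; inversion Hv. Qed.

Lemma par_value_lam v t b' :
  is_value v -> par_e v (ELam t b') -> exists t0 b, v = ELam t0 b /\ par_e b b'.
Proof. intros Hv Hp; inversion Hp; subst; eauto; inversion Hv. Qed.

Inductive bigstep : nat -> expr -> expr -> Prop :=
| BS_Const h c : bigstep h (EConst c) (EConst c)
| BS_Lam h t b : bigstep h (ELam t b) (ELam t b)
| BS_Beta h e1 e2 t b w v :
    bigstep h e1 (ELam t b) -> bigstep h e2 w -> bigstep h (subst0_e w b) v ->
    bigstep (S h) (EApp e1 e2) v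
| BS_Delta h e1 e2 c1 c2 c :
    bigstep h e1 (EConst c1) -> bigstep h e2 (EConst c2) ->
    step (EApp (EConst c1) (EConst c2)) (EConst c) ->
    bigstep (S h) (EApp e1 e2) (EConst c)
| BS_BEq h b el er e w :
    bigstep h e w -> bigstep h (EBEq b el er e) (EBEq b el er w)
| BS_XEq h tx t el er e w :
    bigstep h e w -> bigstep h (EXEq tx t el er e) (EXEq tx t el er w).

Definition evals (e v : expr) : Prop := exists h, bigstep h e v.

Lemma bigstep_mono h e v : bigstep h e v -> forall h', h <= h' -> bigstep h' e v.
Proof.
  induction 1; intros h' Hle; try (constructor; auto; fail);
    (destruct h' as [|h']; [lia|]).
  - eapply BS_Beta; eauto using le_S_n.
  - eapply BS_Delta; eauto using le_S_n.
Qed.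

Lemma bigstep_value h v : is_value v -> bigstep h v v.
Proof. induction 1; constructor; auto. Qed.

Lemma bigstep_value_inv h v w : is_value v -> bigstep h v w -> w = v.
Proof.
  intros Hv; revert w; induction Hv; intros w' Hb; inversion Hb; subst; f_equal; auto.
Qed.

Lemma evals_beta e1 e2 t b w v :
  evals e1 (ELam t b) -> evals e2 w -> evals (subst0_e w b) v -> evals (EApp e1 e2) v.
Proof.
  intros [h1 H1] [h2 H2] [h3 H3]. exists (S (max h1 (max h2 h3))).
  econstructor; eapply bigstep_mono; eauto; lia.
Qed.

Lemma evals_delta e1 e2 c1 c2 c :
  evals e1 (EConst c1) -> evals e2 (EConst c2) ->
  step (EApp (EConst c1) (EConst c2)) (EConst c) -> evals (EApp e1 e2) (EConst c).
Proof.
  intros [h1 H1] [h2 H2] Hs. exists (S (max h1 h2)).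
  econstructor; eauto; eapply bigstep_mono; eauto; lia.
Qed.

Lemma evals_value v : is_value v -> evals v v.
Proof. exists 0; apply bigstep_value; assumption. Qed.

Lemma step_evals e e0 v : step e e0 -> evals e0 v -> evals e v.
Proof.
  intros Hs; revert v; induction Hs; intros w [h Hb].
  1-2: inversion Hb; subst; [eapply evals_beta | eapply evals_delta];
    try apply IHHs; solve [eexists; eassumption | eassumption].
  1-2: inversion Hb; subst;
    match goal with H : bigstep _ ?a _, IH : forall v, evals ?a v -> _ |- _ =>
      destruct (IH _ (ex_intro _ _ H)) end;
    eexists; constructor; eassumption.
  1: eapply evals_beta; eauto using evals_value, VLam; exists h; assumption.
  all: inversion Hb; subst; eapply evals_delta; eauto using evals_value, VConst, step.
Qed.

Lemma steps_evals e v : steps e v -> is_value v -> evals e v.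
Proof.
  intros Hs Hv; apply clos_rt_rt1n in Hs; induction Hs.
  - apply evals_value; assumption.
  - eapply step_evals; eauto.
Qed.

Lemma steps_congr (f : expr -> expr) :
  (forall a b, step a b -> step (f a) (f b)) -> forall a b, steps a b -> steps (f a) (f b).
Proof.
  intros Hf a b; induction 1; [apply rt_step; auto | apply rt_refl | eapply rt_trans; eassumption].
Qed.

Lemma steps_app a u b w : steps a u -> is_value u -> steps b w -> steps (EApp a b) (EApp u w).
Proof.
  intros Ha Hu Hb; eapply rt_trans.
  - apply (steps_congr (fun x => EApp x b)); [constructor; assumption | exact Ha].
  - apply (steps_congr (EApp u)); [constructor; assumption | exact Hb].
Qed.

Definition value_or_var (e : expr) : Prop := is_value e \/ exists y, e = EVar y.

Definition par_vsubst (s s' : nat -> expr) : Prop :=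
  forall x, par_e (s x) (s' x) /\ value_or_var (s x).

Definition evals_par (e v' : expr) : Prop :=
  exists v, steps e v /\ is_value v /\ par_e v v'.

Lemma par_vsubst_par s s' : par_vsubst s s' -> forall n, par_e (s n) (s' n).
Proof. intros H n; apply H. Qed.

Lemma par_vsubst_id : par_vsubst EVar EVar.
Proof. intros x; split; [constructor | right; eauto]. Qed.

Lemma par_vsubst_scons w w' s s' :
  is_value w -> par_e w w' -> par_vsubst s s' -> par_vsubst (scons w s) (scons w' s').
Proof. intros Hw Hp Hs [|n]; [split; [|left]; assumption | apply Hs]. Qed.

Lemma evals_par_value v v' : is_value v -> par_e v v' -> evals_par v v'.
Proof. exists v; split; [apply rt_refl | split; assumption]. Qed.

Lemma evals_par_steps_value e v : steps e v -> is_value v -> evals_par e v.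
Proof. intros Hs Hv; exists v; split; [|split]; [assumption.. | apply par_refl]. Qed.

Lemma evals_par_steps e e0 v' : steps e e0 -> evals_par e0 v' -> evals_par e v'.
Proof. intros H [v (Hs & Hv & Hp)]; exists v; split; [eapply rt_trans; eassumption | auto]. Qed.

Lemma evals_par_BEq b el el' er er' e w :
  par_e el el' -> par_e er er' -> evals_par e w ->
  evals_par (EBEq b el er e) (EBEq b el' er' w).
Proof.
  intros Hl Hr [u (Su & Vu & Pu)].
  apply evals_par_steps with (EBEq b el er u).
  - apply (steps_congr (EBEq b el er)); [constructor; assumption | assumption].
  - apply evals_par_value; constructor; assumption.
Qed.

Lemma evals_par_XEq tx tx' t t' el el' er er' e w :
  par_t tx tx' -> par_t t t' -> par_e el el' -> par_e er er' -> evals_par e w ->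
  evals_par (EXEq tx t el er e) (EXEq tx' t' el' er' w).
Proof.
  intros Hx Ht Hl Hr [u (Su & Vu & Pu)].
  apply evals_par_steps with (EXEq tx t el er u).
  - apply (steps_congr (EXEq tx t el er)); [constructor; assumption | assumption].
  - apply evals_par_value; constructor; assumption.
Qed.

Lemma par_vsubst_bigstep s s' x h v' :
  par_vsubst s s' -> bigstep h (s' x) v' -> evals_par (s x) v'.
Proof.
  intros Hs Hev; destruct (Hs x) as [Hp [Hv | [y Hy]]].
  - rewrite (bigstep_value_inv _ _ _ (par_value _ _ Hv Hp) Hev).
    apply evals_par_value; assumption.
  - assert (Hx : s' x = EVar y) by (rewrite Hy in Hp; inversion Hp; auto).
    rewrite Hx in Hev; inversion Hev.
Qed.

Lemma par_bigstep_evals_par h :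
  forall e e' s s' v', par_e e e' -> par_vsubst s s' -> bigstep h (subst_e s' e') v' ->
  evals_par (subst_e s e) v'.
Proof.
  induction h as [h IHh] using lt_wf_ind.
  intros e e' s s' v' D; revert s s' v'.
  induction D; intros s s' r Hs Hev; simpl in Hev |- *;
    pose proof (par_vsubst_par _ _ Hs) as Hpar;
    (* δ-redexes contracted by ⇛: e takes the same step *)
    try solve [inversion Hev; subst; apply evals_par_steps_value;
               [apply rt_step; constructor; auto | constructor]].
  - eapply par_vsubst_bigstep; eassumption.
  - inversion Hev; subst; apply evals_par_value; constructor.
  - inversion Hev; subst; apply evals_par_value; constructor;
      auto using par_subst_e, par_subst_t, par_up_sub.
  - inversion Hev; subst.
    + destruct (IHh h0 ltac:(lia) _ _ _ _ _ D1 Hs ltac:(eassumption)) as [u1 (S1 & V1 & P1)].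
      destruct (par_value_lam _ _ _ V1 P1) as (t0 & b0 & -> & Pb).
      destruct (IHh h0 ltac:(lia) _ _ _ _ _ D2 Hs ltac:(eassumption)) as [u2 (S2 & V2 & P2)].
      apply evals_par_steps with (subst0_e u2 b0).
      * eapply rt_trans; [apply steps_app; eauto using VLam | apply rt_step; constructor; auto].
      * eapply (IHh h0 ltac:(lia) _ _ _ _ _ Pb); [|eassumption].
        apply par_vsubst_scons; auto using par_vsubst_id.
    + destruct (IHh h0 ltac:(lia) _ _ _ _ _ D1 Hs ltac:(eassumption)) as [u1 (S1 & V1 & P1)].
      destruct (IHh h0 ltac:(lia) _ _ _ _ _ D2 Hs ltac:(eassumption)) as [u2 (S2 & V2 & P2)].
      rewrite (par_value_const _ _ V1 P1), (par_value_const _ _ V2 P2) in *.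
      apply evals_par_steps_value; [|constructor].
      eapply rt_trans; [apply steps_app; eauto using VConst | apply rt_step; assumption].
  - rewrite subst_subst0_scons in Hev.
    apply evals_par_steps with (subst_e (scons (subst_e s v) s) e).
    + rewrite <- subst0_up_sub; apply rt_step; constructor; auto using value_subst.
    + eapply IHD1; [|exact Hev].
      apply par_vsubst_scons; auto using value_subst, par_subst_e.
  - inversion Hev; subst; apply evals_par_BEq; eauto using par_subst_e.
  - inversion Hev; subst; apply evals_par_XEq; eauto using par_subst_e, par_subst_t, par_up_sub.
Qed.

Lemma par_steps_evals_par e e' v' : par_e e e' -> steps e' v' -> is_value v' -> evals_par e v'.
Proof.
  intros Hp Hs Hv; destruct (steps_evals _ _ Hs Hv) as [h Hb].
  rewrite <- (proj1 subst_id e).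
  apply (par_bigstep_evals_par h e e' EVar EVar); [assumption | apply par_vsubst_id |].
  rewrite (proj1 subst_id); assumption.
Qed.

Lemma par_star_steps_value e e' v' : par_star e e' -> steps e' v' -> is_value v' ->
  exists v, steps e v /\ is_value v /\ par_star v v'.
Proof.
  intros H; apply clos_rt_rt1n in H; revert v'.
  induction H as [|e e0 e' Hp _ IH]; intros v' Hs Hv.
  - exists v'; repeat split; [assumption | assumption | apply rt_refl].
  - destruct (IH _ Hs Hv) as [v0 (S0 & V0 & P0)].
    destruct (par_steps_evals_par _ _ _ Hp S0 V0) as [v (S1 & V1 & P1)].
    exists v; repeat split; [assumption | assumption | eapply rt_trans; [apply rt_step|]; eassumption].
Qed.

Lemma par_star_value_const v c : is_value v -> par_star v (EConst c) -> v = EConst c.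
Proof.
  intros Hv H; apply clos_rt_rt1n in H; remember (EConst c) as z.
  induction H as [|x y z Hxy _ IH]; [reflexivity|].
  pose proof (IH (par_value _ _ Hv Hxy) Heqz); subst.
  apply par_value_const; assumption.
Qed.

Lemma par_star_app_l a a' b : par_star a a' -> par_star (EApp a b) (EApp a' b).
Proof.
  induction 1; [apply rt_step; constructor; [assumption | apply par_refl]
               | apply rt_refl | eapply rt_trans; eassumption].
Qed.

Lemma val_rel_par_star t : forall d v1 v2 v1' v2',
  is_value v1 -> is_value v2 -> par_star v1 v1' -> par_star v2 v2' ->
  val_rel t d v1' v2' -> val_rel t d v1 v2.
Proof.
  induction t as [b r | tx _ t IHt | t _ el er]; intros d v1 v2 v1' v2' V1 V2 P1 P2 H; simpl in *.
  - destruct H as (c & -> & -> & Hrest).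
    rewrite (par_star_value_const _ _ V1 P1), (par_star_value_const _ _ V2 P2). eauto.
  - intros v3 v4 V3 C3 V4 C4 R34.
    destruct (H v3 v4 V3 C3 V4 C4 R34) as (w1 & w2 & S1 & W1 & S2 & W2 & R).
    destruct (par_star_steps_value _ _ _ (par_star_app_l _ _ v3 P1) S1 W1) as (u1 & T1 & U1 & Q1).
    destruct (par_star_steps_value _ _ _ (par_star_app_l _ _ v4 P2) S2 W2) as (u2 & T2 & U2 & Q2).
    exists u1, u2; repeat split; eauto.
  - exact H.
Qed.

Theorem lemmaB20 :
  forall (d : list (expr * expr)) (e1 e1' e2 e2' : expr) (t : ty),
    pending_subst d ->
    par_star e1 e1' -> par_star e2 e2' ->
    exp_rel d e1' e2' t ->
    exp_rel d e1 e2 t.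
Proof.
  intros d e1 e1' e2 e2' t _ P1 P2 (v1' & v2' & S1 & V1 & S2 & V2 & R).
  destruct (par_star_steps_value _ _ _ P1 S1 V1) as (v1 & T1 & U1 & Q1).
  destruct (par_star_steps_value _ _ _ P2 S2 V2) as (v2 & T2 & U2 & Q2).
  exists v1, v2; repeat split; try assumption.
  eapply val_rel_par_star; eassumption.
Qed.
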